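(* Let $U$ be a model of $\mathrm{ZFCU}_R$. Then $U\models$ Collection if and only if the Łoś theorem holds for all internal ultrapowers of $U$.
   Context: $\mathrm{ZFCU}_R$ is ZFC with urelements (language $\{\in,\mathcal{A}\}$, $\mathcal{A}$ the urelement predicate), formulated with Replacement rather than Collection, with AC. Collection: for every formula $\varphi$, $\forall w,u(\forall x\in w\exists y\varphi(x,y,u)\rightarrow\exists v\forall x\in w\exists y\in v\varphi(x,y,u))$. Internal ultrapower: let $F,x\in U$ with $U\models$ ''$F$ is an ultrafilter on $x$''. For $f,g\in U$ that $U$ thinks are functions on $x$, put $f=_Fg$ iff $U\models\{y\in x: f(y)=g(y)\}\in F$; $[f]$ is the $=_F$-class of $f$ among such functions in $U$, and $U/F$ is the set of these classes, with $[g]\,\hat\in\,[f]$ iff $U\models\{y\in x:g(y)\in f(y)\}\in F$ and $\hat{\mathcal{A}}([f])$ iff $U\models\{y\in x:\mathcal{A}(f(y))\}\in F$. The internal ultrapower is $\langle U/F,\hat\in,\hat{\mathcal{A}}\rangle$. The Łoś theorem holds for $U/F$ if for every formula $\varphi$ and $[f_1],\dots,[f_n]\in U/F$: $U/F\models\varphi([f_1],\dots,[f_n])$ iff $U\models\{y\in x:\varphi(f_1(y),\dots,f_n(y))\}\in F$. *)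

From Stdlib Require Import Arith.

Record structure := Structure {
  dom :> Type;
  smem : dom -> dom -> Prop;
  sur : dom -> Prop            (* interpretation of the urelement predicate A *)
}.

Inductive form : Type :=
| FMem : nat -> nat -> form
| FEq  : nat -> nat -> form
| FUr  : nat -> form
| FBot : form
| FNot : form -> form
| FAnd : form -> form -> form
| FOr  : form -> form -> form
| FImp : form -> form -> form
| FAll : nat -> form -> form
| FEx  : nat -> form -> form.

Definition upd {M : Type} (e : nat -> M) (i : nat) (a : M) : nat -> M :=
  fun j => if Nat.eqb j i then a else e j.

Fixpoint sat (M : structure) (e : nat -> M) (phi : form) : Prop :=
  match phi with
  | FMem i j => smem M (e i) (e j)
  | FEq i j => e i = e j
  | FUr i => sur M (e i)
  | FBot => False
  | FNot p => ~ sat M e p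
  | FAnd p q => sat M e p /\ sat M e q
  | FOr p q => sat M e p \/ sat M e q
  | FImp p q => sat M e p -> sat M e q
  | FAll i p => forall a : M, sat M (upd e i a) p
  | FEx i p => exists a : M, sat M (upd e i a) p
  end.

Section Internal.
Variable U : structure.
Local Notation "a ∈ b" := (smem U a b) (at level 70).
Local Notation A := (sur U).

Definition is_sing (z a : U) : Prop := ~ A z /\ forall w, w ∈ z <-> w = a.
Definition is_upair (z a b : U) : Prop := ~ A z /\ forall w, w ∈ z <-> (w = a \/ w = b).
Definition is_opair (p a b : U) : Prop :=
  ~ A p /\ forall w, w ∈ p <-> (is_sing w a \/ is_upair w a b).
Definition app (f a b : U) : Prop := exists p, p ∈ f /\ is_opair p a b.
Definition fun_on (f x : U) : Prop :=
  ~ A f /\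
  (forall p, p ∈ f -> exists a b, a ∈ x /\ is_opair p a b) /\
  (forall a, a ∈ x -> exists b, app f a b /\ forall b', app f a b' -> b' = b).

Definition subset_of (s x : U) : Prop := ~ A s /\ forall z, z ∈ s -> z ∈ x.

Definition is_ultrafilter (F x : U) : Prop :=
  ~ A F /\ ~ A x /\
  (forall s, s ∈ F -> subset_of s x) /\
  x ∈ F /\
  (forall s, s ∈ F -> exists z, z ∈ s) /\
  (forall a b c, a ∈ F -> b ∈ F -> ~ A c ->
     (forall z, z ∈ c <-> (z ∈ a /\ z ∈ b)) -> c ∈ F) /\
  (forall a b, a ∈ F -> subset_of b x -> (forall z, z ∈ a -> z ∈ b) -> b ∈ F) /\
  (forall s, subset_of s x ->
     s ∈ F \/ (forall c, ~ A c -> (forall z, z ∈ c <-> (z ∈ x /\ ~ z ∈ s)) -> c ∈ F)).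

Definition well_orders (r x : U) : Prop :=
  let lt a b := exists p, p ∈ r /\ is_opair p a b in
  (forall a, a ∈ x -> ~ lt a a) /\
  (forall a b c, a ∈ x -> b ∈ x -> c ∈ x -> lt a b -> lt b c -> lt a c) /\
  (forall a b, a ∈ x -> b ∈ x -> a = b \/ lt a b \/ lt b a) /\
  (forall s, subset_of s x -> (exists z, z ∈ s) ->
     exists m, m ∈ s /\ forall z, z ∈ s -> ~ lt z m).

Definition Ax_Extensionality : Prop :=
  forall a b, ~ A a -> ~ A b -> (forall z, z ∈ a <-> z ∈ b) -> a = b.
Definition Ax_Urelements : Prop := forall a, A a -> forall z, ~ z ∈ a.
Definition Ax_Foundation : Prop :=
  forall a, (exists y, y ∈ a) -> exists y, y ∈ a /\ forall z, z ∈ y -> ~ z ∈ a.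
Definition Ax_Pairing : Prop :=
  forall a b, exists p, ~ A p /\ forall z, z ∈ p <-> (z = a \/ z = b).
Definition Ax_Union : Prop :=
  forall a, exists u, ~ A u /\ forall z, z ∈ u <-> exists y, y ∈ a /\ z ∈ y.
Definition Ax_Powerset : Prop :=
  forall a, exists p, ~ A p /\ forall s, s ∈ p <-> subset_of s a.
Definition Ax_Infinity : Prop :=
  exists w, ~ A w /\
    (exists e, e ∈ w /\ ~ A e /\ forall z, ~ z ∈ e) /\
    (forall y, y ∈ w -> exists s, s ∈ w /\ ~ A s /\ forall z, z ∈ s <-> (z ∈ y \/ z = y)).
(* Separation schema: variable i is the separated variable, e gives parameters *)
Definition Ax_Separation : Prop :=
  forall (phi : form) (i : nat) (e : nat -> U) (a : U),
    exists s, ~ A s /\ forall z, z ∈ s <-> (z ∈ a /\ sat U (upd e i z) phi).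
(* Replacement schema (x is variable i, y is variable j, parameters from e) *)
Definition Ax_Replacement : Prop :=
  forall (phi : form) (i j : nat) (e : nat -> U) (w : U),
    (forall a, a ∈ w -> exists b, sat U (upd (upd e i a) j b) phi /\
        forall b', sat U (upd (upd e i a) j b') phi -> b' = b) ->
    exists v, forall a, a ∈ w -> exists b, b ∈ v /\ sat U (upd (upd e i a) j b) phi.
Definition Ax_Choice : Prop := forall a, ~ A a -> exists r, ~ A r /\ well_orders r a.

Definition ZFCU_R : Prop :=
  Ax_Extensionality /\ Ax_Urelements /\ Ax_Foundation /\ Ax_Pairing /\ Ax_Union /\
  Ax_Powerset /\ Ax_Infinity /\ Ax_Separation /\ Ax_Replacement /\ Ax_Choice.

Definition Collection : Prop :=
  forall (phi : form) (i j : nat) (e : nat -> U) (w : U),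
    (forall a, a ∈ w -> exists b, sat U (upd (upd e i a) j b) phi) ->
    exists v, forall a, a ∈ w -> exists b, b ∈ v /\ sat U (upd (upd e i a) j b) phi.

Section Ultrapower.
Variables F x : U.

Definition inF (P : U -> Prop) : Prop :=
  exists s, s ∈ F /\ ~ A s /\ forall y, y ∈ s <-> (y ∈ x /\ P y).

Definition eqF (f g : U) : Prop :=
  inF (fun y => exists v, app f y v /\ app g y v).

Definition ucls (f : U) : U -> Prop := fun g => fun_on g x /\ eqF f g.

Definition uclass : Type :=
  { C : U -> Prop | exists f, fun_on f x /\ C = ucls f }.

Definition umem (C D : uclass) : Prop :=
  exists g f, proj1_sig C g /\ proj1_sig D f /\
    inF (fun y => exists a b, app g y a /\ app f y b /\ a ∈ b).

Definition uur (C : uclass) : Prop :=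
  exists f, proj1_sig C f /\ inF (fun y => exists a, app f y a /\ A a).

Definition ultrapower : structure := Structure uclass umem uur.

Definition Los : Prop :=
  forall (phi : form) (rho : nat -> uclass) (f : nat -> U),
    (forall k, proj1_sig (rho k) (f k)) ->
    (sat ultrapower rho phi <->
     inF (fun y => exists g : nat -> U, (forall k, app (f k) y (g k)) /\ sat U g phi)).

End Ultrapower.
End Internal.

From Stdlib Require Import Arith Lia Bool Classical ClassicalEpsilon FunctionalExtensionality
  PropExtensionality ProofIrrelevance.

(* Collection => Łoś.  The induction on formulas is routine except for the existential
   step.  If {y ∈ x : ∃b φ(f(y), b)} ∈ F, Collection bounds the witnesses in a set v, and a
   well-ordering of v ∪ x (Choice) picks the least witness for each y; Separation inside
   x × (v ∪ x) turns this selection into a function of U, whose class witnesses ∃ in U/F.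

   Łoś => Collection.  Suppose every a ∈ w has a φ-witness but no set collects witnesses for
   all of w.  Call B ⊆ w collectible if some set contains witnesses for all a ∈ B; these sets
   form an ideal.  Zorn's lemma inside U (a maximal chain built by recursion along a
   well-ordering of the set of filters) gives an ultrafilter M on w containing no collectible
   set.  With the identity on w for the distinguished variable and constant functions for the
   parameters, {a ∈ w : ∃b φ(a, b)} = w ∈ M, so Łoś gives [h] ∈ U/M with φ(a, h(a)) for all a
   in some B ∈ M; by Replacement the range of h then collects B, a contradiction. *)

Lemma upd_eq {M : Type} (e : nat -> M) i a : upd e i a i = a.
Proof. unfold upd. now rewrite Nat.eqb_refl. Qed.

Lemma upd_neq {M : Type} (e : nat -> M) i j a : j <> i -> upd e i a j = e j.
Proof. intro H. unfold upd. apply Nat.eqb_neq in H. now rewrite H. Qed.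

Ltac simpl_eqb := repeat match goal with
  | |- context [Nat.eqb ?x ?y] =>
      first [ replace (Nat.eqb x y) with true by (symmetry; apply Nat.eqb_eq; lia)
            | replace (Nat.eqb x y) with false by (symmetry; apply Nat.eqb_neq; lia) ]
  end; cbv beta iota.

Fixpoint var_bound (phi : form) : nat :=
  match phi with
  | FMem i j | FEq i j => S (max i j)
  | FUr i => S i
  | FBot => 0
  | FNot p => var_bound p
  | FAnd p q | FOr p q | FImp p q => max (var_bound p) (var_bound q)
  | FAll i p | FEx i p => max (S i) (var_bound p)
  end.

Lemma sat_agree (M : structure) (phi : form) : forall e e' : nat -> M,
  (forall k, k < var_bound phi -> e k = e' k) -> (sat M e phi <-> sat M e' phi).
Proof.
  induction phi; intros e e' H; cbn [sat var_bound] in *.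
  1-3: rewrite !H by lia; tauto.
  - tauto.
  - rewrite (IHphi e e') by auto. tauto.
  - rewrite (IHphi1 e e'), (IHphi2 e e') by (intros; apply H; lia); tauto.
  - rewrite (IHphi1 e e'), (IHphi2 e e') by (intros; apply H; lia); tauto.
  - rewrite (IHphi1 e e'), (IHphi2 e e') by (intros; apply H; lia); tauto.
  - split; intros H1 a; specialize (H1 a); revert H1; apply IHphi;
      intros k Hk; unfold upd; destruct (Nat.eqb k n); auto; (apply H || (symmetry; apply H)); lia.
  - split; intros [a H1]; exists a; revert H1; apply IHphi;
      intros k Hk; unfold upd; destruct (Nat.eqb k n); auto; (apply H || (symmetry; apply H)); lia.
Qed.

Lemma sat_ext (M : structure) (phi : form) (e e' : nat -> M) :
  (forall k, e k = e' k) -> (sat M e phi <-> sat M e' phi).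
Proof. intros H. apply sat_agree. auto. Qed.

Fixpoint rename (s : nat -> nat) (phi : form) : form :=
  match phi with
  | FMem i j => FMem (s i) (s j)
  | FEq i j => FEq (s i) (s j)
  | FUr i => FUr (s i)
  | FBot => FBot
  | FNot p => FNot (rename s p)
  | FAnd p q => FAnd (rename s p) (rename s q)
  | FOr p q => FOr (rename s p) (rename s q)
  | FImp p q => FImp (rename s p) (rename s q)
  | FAll i p => FAll (s i) (rename s p)
  | FEx i p => FEx (s i) (rename s p)
  end.

Lemma sat_rename (M : structure) (s : nat -> nat) (s_inj : forall a b, s a = s b -> a = b)
  (phi : form) : forall e : nat -> M, sat M e (rename s phi) <-> sat M (fun k => e (s k)) phi.
Proof.
  assert (Hupd : forall (e : nat -> M) n a k, upd e (s n) a (s k) = upd (fun k => e (s k)) n a k).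
  { intros e n a k. unfold upd.
    destruct (Nat.eqb_spec k n), (Nat.eqb_spec (s k) (s n)); subst; auto;
      exfalso; auto. }
  induction phi; intros e; cbn [sat rename]; try tauto.
  - rewrite IHphi; tauto.
  - rewrite IHphi1, IHphi2; tauto.
  - rewrite IHphi1, IHphi2; tauto.
  - rewrite IHphi1, IHphi2; tauto.
  - split; intros H a; specialize (H a); rewrite IHphi in *; revert H; apply sat_ext;
      intro k; rewrite Hupd; auto.
  - split; intros [a H]; exists a; rewrite IHphi in *; revert H; apply sat_ext;
      intro k; rewrite Hupd; auto.
Qed.

(* Separation and Replacement are schemas over [form], so every set they produce is described
   by an explicit formula over fixed variable slots, paired with a [sat_*] lemma. *)

Definition FIff (p q : form) : form := FAnd (FImp p q) (FImp q p).

Definition f_sing (z a : nat) : form := let t := S (z + a) in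
  FAnd (FNot (FUr z)) (FAll t (FIff (FMem t z) (FEq t a))).
Definition f_upair (z a b : nat) : form := let t := S (z + a + b) in
  FAnd (FNot (FUr z)) (FAll t (FIff (FMem t z) (FOr (FEq t a) (FEq t b)))).
Definition f_opair (p a b : nat) : form := let t := S (p + a + b) in
  FAnd (FNot (FUr p)) (FAll t (FIff (FMem t p) (FOr (f_sing t a) (f_upair t a b)))).
Definition f_app (f a b : nat) : form := let q := S (f + a + b) in
  FEx q (FAnd (FMem q f) (f_opair q a b)).
Definition f_subset (s x : nat) : form := let t := S (s + x) in
  FAnd (FNot (FUr s)) (FAll t (FImp (FMem t s) (FMem t x))).

Section DefinedNotions.
Variable M : structure.

Lemma sat_f_sing z a e : sat M e (f_sing z a) <-> is_sing M (e z) (e a).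
Proof. unfold f_sing, FIff, is_sing; cbn [sat]; unfold upd; simpl_eqb. firstorder. Qed.

Lemma sat_f_upair z a b e : sat M e (f_upair z a b) <-> is_upair M (e z) (e a) (e b).
Proof. unfold f_upair, FIff, is_upair; cbn [sat]; unfold upd; simpl_eqb. firstorder. Qed.

Lemma sat_f_opair p a b e : sat M e (f_opair p a b) <-> is_opair M (e p) (e a) (e b).
Proof.
  unfold f_opair, FIff, is_opair; cbn [sat].
  setoid_rewrite sat_f_sing. setoid_rewrite sat_f_upair.
  unfold upd; simpl_eqb. firstorder.
Qed.

Lemma sat_f_app f a b e : sat M e (f_app f a b) <-> app M (e f) (e a) (e b).
Proof.
  unfold f_app, app; cbn [sat]. setoid_rewrite sat_f_opair. unfold upd; simpl_eqb. firstorder.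
Qed.

Lemma sat_f_subset s x e : sat M e (f_subset s x) <-> subset_of M (e s) (e x).
Proof. unfold f_subset, subset_of; cbn [sat]; unfold upd; simpl_eqb. firstorder. Qed.

End DefinedNotions.

Definition shift {M : Type} (N : nat) (E : nat -> M) : nat -> M := fun k => E (N + k).

(* Agrees with [E] below [N] and holds the parameter [e k] in slot [N + k]. *)
Fixpoint with_params {M : Type} (N : nat) (e E : nat -> M) : nat -> M :=
  match N with
  | 0 => e
  | S N' => fun v => match v with 0 => E 0 | S v' => with_params N' e (fun u => E (S u)) v' end
  end.

Definition sat2 (M : structure) (phi : form) (i j : nat) (e : nat -> M) (a b : M) : Prop :=
  sat M (upd (upd e i a) j b) phi.

Definition f_rel (N : nat) (phi : form) (i j ya yb : nat) : form :=
  FEx (N + i) (FAnd (FEq (N + i) ya)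
    (FEx (N + j) (FAnd (FEq (N + j) yb) (rename (fun k => N + k) phi)))).

Lemma sat_f_rel (M : structure) N phi i j ya yb (E : nat -> M) : ya < N -> yb < N ->
  sat M E (f_rel N phi i j ya yb) <-> sat2 M phi i j (shift N E) (E ya) (E yb).
Proof.
  intros Ha Hb. unfold f_rel, sat2. cbn [sat].
  assert (Hsh : forall a b k,
    upd (upd E (N + i) a) (N + j) b (N + k) = upd (upd (shift N E) i a) j b k).
  { intros a b k. unfold upd, shift.
    destruct (Nat.eqb_spec (N + k) (N + j)), (Nat.eqb_spec k j),
      (Nat.eqb_spec (N + k) (N + i)), (Nat.eqb_spec k i); reflexivity || lia. }
  setoid_rewrite (sat_rename M (fun k => N + k)); [|intros; lia..].
  setoid_rewrite (sat_ext M phi _ _ (Hsh _ _)).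
  split.
  - intros [a [Ha' [b [Hb' H]]]]. rewrite upd_eq, upd_neq in Ha' by lia.
    rewrite upd_eq, !upd_neq in Hb' by lia. subst. exact H.
  - intros H. exists (E ya). split; [rewrite upd_eq, upd_neq by lia; reflexivity|].
    exists (E yb). split; [rewrite upd_eq, !upd_neq by lia; reflexivity|exact H].
Qed.

(* Slot 1 holds an argument [y], slot [3k+2] a function [f_k], and slot [3k] the variable [k]
   of [phi]: [f_comp n skip phi] says that [phi] holds once every variable [k < n] other than
   [skip] is set to [f_k(y)]. *)
Fixpoint f_comp (n skip : nat) (phi : form) : form :=
  match n with
  | 0 => rename (fun k => 3 * k) phi
  | S m => if Nat.eqb m skip then f_comp m skip phi
           else FEx (3 * m) (FAnd (f_app (3 * m + 2) 1 (3 * m)) (f_comp m skip phi))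
  end.

Lemma sat_f_comp (M : structure) skip phi : forall n (e : nat -> M),
  sat M e (f_comp n skip phi) <->
  exists c : nat -> M,
    (forall k, k < n -> k <> skip -> app M (e (3 * k + 2)) (e 1) (c k)) /\
    sat M (fun k => if (k <? n) && negb (k =? skip) then c k else e (3 * k)) phi.
Proof.
  induction n; intros e; cbn [f_comp].
  - rewrite sat_rename by (intros; lia). split.
    + intros H. exists e. split; [intros; lia|]. revert H; apply sat_ext; reflexivity.
    + intros [c [_ H]]. revert H; apply sat_ext; reflexivity.
  - destruct (Nat.eqb_spec n skip) as [Hskip|Hskip].
    + rewrite IHn. split; intros [c [H1 H2]]; exists c; split;
        try (intros k Hk Hk'; apply H1; lia);
        revert H2; apply sat_ext; intro k;
        destruct (Nat.ltb_spec k n), (Nat.ltb_spec k (S n)), (Nat.eqb_spec k skip);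
        simpl; auto; lia.
    + cbn [sat]. setoid_rewrite sat_f_app. setoid_rewrite IHn. split.
      * intros [a [Ha [c [H1 H2]]]]. exists (upd c n a). split.
        -- intros k Hk Hk'. unfold upd. destruct (Nat.eqb_spec k n).
           ++ subst. revert Ha. rewrite !upd_neq by lia. rewrite upd_eq. auto.
           ++ specialize (H1 k ltac:(lia) Hk'). revert H1. rewrite !upd_neq by lia. auto.
        -- revert H2; apply sat_ext; intro k. unfold upd.
           destruct (Nat.ltb_spec k n), (Nat.ltb_spec k (S n)), (Nat.eqb_spec k skip),
             (Nat.eqb_spec k n), (Nat.eqb_spec (3 * k) (3 * n)); simpl; auto; lia.
      * intros [c [H1 H2]]. exists (c n). split.
        -- specialize (H1 n ltac:(lia) Hskip). rewrite !upd_neq by lia. rewrite upd_eq. auto.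
        -- exists c. split.
           ++ intros k Hk Hk'. rewrite !upd_neq by lia. apply H1; auto.
           ++ revert H2; apply sat_ext; intro k. unfold upd.
              destruct (Nat.ltb_spec k n), (Nat.ltb_spec k (S n)), (Nat.eqb_spec k skip),
                (Nat.eqb_spec (3 * k) (3 * n)); simpl; auto; try lia.
              replace k with n by lia. auto.
Qed.

Definition fun_slots {M : Type} (f : nat -> M) : nat -> M := fun v => f ((v - 2) / 3).

Lemma fun_slots_spec {M : Type} (f : nat -> M) k : fun_slots f (3 * k + 2) = f k.
Proof.
  unfold fun_slots. f_equal. replace (3 * k + 2 - 2) with (k * 3) by lia. apply Nat.div_mul; lia.
Qed.

Section ZFCU.
Variable U : structure.
Hypothesis HZ : ZFCU_R U.
Local Notation "a ∈ b" := (smem U a b) (at level 70).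
Local Notation A := (sur U).
Local Notation "a ⊆ b" := (forall z, z ∈ a -> z ∈ b) (at level 70).

Lemma ax_ext : Ax_Extensionality U. Proof. apply HZ. Qed.
Lemma ax_urel : Ax_Urelements U. Proof. apply HZ. Qed.
Lemma ax_pair : Ax_Pairing U. Proof. apply HZ. Qed.
Lemma ax_union : Ax_Union U. Proof. apply HZ. Qed.
Lemma ax_power : Ax_Powerset U. Proof. apply HZ. Qed.
Lemma ax_sep : Ax_Separation U. Proof. apply HZ. Qed.
Lemma ax_repl : Ax_Replacement U. Proof. apply HZ. Qed.
Lemma ax_choice : Ax_Choice U. Proof. apply HZ. Qed.

Lemma ex_upair a b : exists z, is_upair U z a b.
Proof. apply ax_pair. Qed.

Lemma ex_sing a : exists z, is_sing U z a.
Proof.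
  destruct (ax_pair a a) as [z [Hz1 Hz2]]. exists z. split; auto.
  intro w; rewrite Hz2; tauto.
Qed.

Lemma ex_opair a b : exists p, is_opair U p a b.
Proof.
  destruct (ex_sing a) as [s Hs]. destruct (ex_upair a b) as [u Hu].
  destruct (ax_pair s u) as [p [Hp1 Hp2]]. exists p. split; auto.
  intro w. rewrite Hp2. split.
  - intros [->| ->]; auto.
  - intros [H|H].
    + left. apply ax_ext; [apply H|apply Hs|]. intro z. rewrite (proj2 H), (proj2 Hs). tauto.
    + right. apply ax_ext; [apply H|apply Hu|]. intro z. rewrite (proj2 H), (proj2 Hu). tauto.
Qed.

Lemma opair_inj p a b c d : is_opair U p a b -> is_opair U p c d -> a = c /\ b = d.
Proof.
  intros [_ H1] [_ H2].
  assert (Hac : a = c).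
  { destruct (ex_sing a) as [s Hs].
    assert (Hsp : s ∈ p) by (apply H1; auto).
    apply H2 in Hsp. destruct Hsp as [[_ Hc]|[_ Hc]].
    - apply Hc. apply (proj2 Hs). auto.
    - assert (c ∈ s) by (apply Hc; auto). apply (proj2 Hs) in H. auto. }
  subst c. split; auto.
  destruct (ex_upair a b) as [u Hu].
  assert (Hup : u ∈ p) by (apply H1; auto).
  apply H2 in Hup. destruct Hup as [[_ Hc]|[_ Hc]].
  - assert (Hb : b = a) by (apply Hc; apply (proj2 Hu); auto). subst b.
    destruct (ex_upair a d) as [u' Hu'].
    assert (Hup : u' ∈ p) by (apply H2; auto).
    apply H1 in Hup. assert (Hd : d ∈ u') by (apply (proj2 Hu'); auto).
    destruct Hup as [[_ Hc']|[_ Hc']]; apply Hc' in Hd; intuition.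
  - assert (Hb : b ∈ u) by (apply (proj2 Hu); auto). apply Hc in Hb.
    destruct Hb as [Hb|Hb]; auto. subst b.
    assert (Hd : d ∈ u) by (apply Hc; auto). apply (proj2 Hu) in Hd. intuition.
Qed.

Lemma ex_union2 a b : exists z, ~ A z /\ forall w, w ∈ z <-> (w ∈ a \/ w ∈ b).
Proof.
  destruct (ax_pair a b) as [p [Hp1 Hp2]]. destruct (ax_union p) as [z [Hz1 Hz2]].
  exists z. split; auto. intro w. rewrite Hz2. split.
  - intros [y [Hy Hw]]. apply Hp2 in Hy. destruct Hy; subst; auto.
  - intros [H|H]; [exists a|exists b]; rewrite Hp2; auto.
Qed.

Lemma ex_add_when (a b : U) (c : Prop) : ~ A a ->
  exists d, ~ A d /\ forall z, z ∈ d <-> (z ∈ a \/ (z = b /\ c)).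
Proof.
  intros Ha. destruct (classic c) as [Hc|Hc].
  - destruct (ex_sing b) as [s [_ Hs]]. destruct (ex_union2 a s) as [d [Hd Hd']].
    exists d. split; auto. intro z. rewrite Hd', Hs. tauto.
  - exists a. split; auto. tauto.
Qed.

Lemma ex_inter a b : exists c, ~ A c /\ forall z, z ∈ c <-> (z ∈ a /\ z ∈ b).
Proof.
  destruct (ax_sep (FMem 0 1) 0 (fun _ => b) a) as [c [Hc1 Hc2]]. exists c. split; [auto|].
  intro z. rewrite Hc2. cbn [sat]. unfold upd; simpl_eqb. tauto.
Qed.

Lemma ex_product x v :
  exists P, ~ A P /\ forall p, p ∈ P <-> exists a b, a ∈ x /\ b ∈ v /\ is_opair U p a b.
Proof.
  destruct (ex_union2 x v) as [W [HW1 HW2]].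
  destruct (ax_power W) as [P1 [HP1 HP1']].
  destruct (ax_power P1) as [P2 [HP2 HP2']].
  destruct (ax_sep (FEx 3 (FEx 4 (FAnd (FMem 3 1) (FAnd (FMem 4 2) (f_opair 0 3 4))))) 0
     (fun k => match k with 1 => x | _ => v end) P2) as [P [HP HP']].
  exists P. split; auto. intro p. rewrite HP'. cbn [sat]. setoid_rewrite sat_f_opair.
  unfold upd; simpl_eqb. split.
  - intros [_ [a [b [H1 [H2 H3]]]]]. eauto.
  - intros [a [b [H1 [H2 H3]]]]. split; [|eauto].
    apply HP2'. split; [apply H3|]. intros w Hw. apply HP1'. apply H3 in Hw.
    destruct Hw as [Hw|Hw]; split; try apply Hw; intros z Hz; apply HW2;
      apply (proj2 Hw) in Hz; intuition congruence.
Qed.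

(* Unspecified when [y] is outside the domain of [f]. *)
Definition fval (f y : U) : U := epsilon (inhabits y) (fun b => app U f y b).

Lemma app_fval f x y b : fun_on U f x -> y ∈ x -> (app U f y b <-> b = fval f y).
Proof.
  intros [_ [_ Hf]] Hy. destruct (Hf y Hy) as [b0 [Hb0 Hu]].
  assert (Hv : app U f y (fval f y)) by (unfold fval; apply epsilon_spec; eauto).
  split; [intros Hb; rewrite (Hu b Hb), (Hu _ Hv); reflexivity|intros ->; exact Hv].
Qed.

Lemma ex_app_fval f x y (P : U -> Prop) : fun_on U f x -> y ∈ x ->
  ((exists b, app U f y b /\ P b) <-> P (fval f y)).
Proof.
  intros Hf Hy. split.
  - intros [b [Hb HP]]. apply (app_fval f x y b Hf Hy) in Hb. subst. exact HP.
  - intros HP. exists (fval f y). split; auto. apply (app_fval f x); auto.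
Qed.

Lemma ex_fun_of_rel (x V : U) (phi : form) (e : nat -> U) :
  (forall a, a ∈ x -> exists b, sat2 U phi 0 1 e a b /\
                                forall b', sat2 U phi 0 1 e a b' -> b' = b) ->
  (forall a b, a ∈ x -> sat2 U phi 0 1 e a b -> b ∈ V) ->
  exists g, fun_on U g x /\ forall a b, a ∈ x -> (app U g a b <-> sat2 U phi 0 1 e a b).
Proof.
  set (R := sat2 U phi 0 1 e). intros Hex HV.
  destruct (ex_product x V) as [P [HP HP']].
  set (N := S (S (var_bound phi))).
  destruct (ax_sep (FEx 0 (FEx 1 (FAnd (f_opair N 0 1) phi))) N e P) as [g [Hg Hg']].
  assert (Hg2 : forall p, p ∈ g <-> p ∈ P /\ exists a b, is_opair U p a b /\ R a b).
  { intro p. rewrite Hg'. cbn [sat]. setoid_rewrite sat_f_opair.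
    unfold R, sat2. apply and_iff_compat_l. split; intros [a [b [H1 H2]]]; exists a, b; split;
    revert H1 H2; unfold upd; simpl_eqb; auto; intros _; apply sat_agree; intros k Hk;
    unfold upd; destruct (Nat.eqb_spec k 1); auto; destruct (Nat.eqb_spec k 0); auto;
    destruct (Nat.eqb_spec k N); auto; lia. }
  assert (Happ : forall a b, a ∈ x -> (app U g a b <-> R a b)).
  { intros a b Ha. split.
    - intros [p [Hp Hpo]]. apply Hg2 in Hp. destruct Hp as [_ [a' [b' [Ho HR]]]].
      destruct (opair_inj _ _ _ _ _ Ho Hpo). subst; auto.
    - intros HR. destruct (ex_opair a b) as [p Hp]. exists p; split; auto.
      apply Hg2. split; [apply HP'; exists a, b; split; auto; split; eauto|eauto]. }
  exists g. split; [|exact Happ]. split; [auto|split].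
  - intros p Hp. apply Hg2 in Hp. destruct Hp as [Hp _]. apply HP' in Hp.
    destruct Hp as [a [b [H1 [H2 H3]]]]. eauto.
  - intros a Ha. destruct (Hex a Ha) as [b [Hb Hu]]. exists b. split.
    + apply Happ; auto.
    + intros b' Hb'. apply Hu. apply Happ; auto.
Qed.

Lemma ex_image g x : fun_on U g x -> exists v, forall a, a ∈ x -> fval g a ∈ v.
Proof.
  intros Hg. destruct (ax_repl (f_app 2 0 1) 0 1 (fun _ => g) x) as [v Hv].
  - intros a Ha. exists (fval g a). rewrite sat_f_app. cbn [upd Nat.eqb].
    split; [apply (app_fval g x); auto|].
    intros b'. rewrite sat_f_app. cbn [upd Nat.eqb]. apply (app_fval g x); auto.
  - exists v. intros a Ha. destruct (Hv a Ha) as [b [Hb Hab]].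
    rewrite sat_f_app in Hab. cbn [upd Nat.eqb] in Hab.
    apply (app_fval g x) in Hab; auto. subst. exact Hb.
Qed.

(** * Witness functions from Collection *)

Lemma ex_least_witness_fun (x W r : U) (chi : form) (e : nat -> U) :
  well_orders U r W ->
  (forall a, a ∈ x -> exists b, b ∈ W /\ sat2 U chi 0 1 e a b) ->
  exists g, fun_on U g x /\ forall a, a ∈ x -> sat2 U chi 0 1 e a (fval g a).
Proof.
  intros [_ [_ [Htri Hmin]]] Hex.
  set (E := with_params 10 e (fun v => match v with 2 => W | _ => r end)).
  set (least := fun a b => b ∈ W /\ sat2 U chi 0 1 e a b /\
                  forall b', b' ∈ W -> sat2 U chi 0 1 e a b' -> ~ app U r b' b).
  set (psi := FAnd (FMem 1 2) (FAnd (f_rel 10 chi 0 1 0 1)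
     (FAll 5 (FImp (FMem 5 2) (FImp (f_rel 10 chi 0 1 0 5) (FNot (f_app 3 5 1))))))).
  assert (Hpsi : forall a b, sat2 U psi 0 1 E a b <-> least a b).
  { intros a b. unfold psi, sat2 at 1. cbn [sat].
    setoid_rewrite sat_f_rel; try lia. setoid_rewrite sat_f_app.
    unfold shift, upd; simpl. reflexivity. }
  assert (Hfun : forall a, a ∈ x -> exists b, least a b /\ forall b', least a b' -> b' = b).
  { intros a Ha. destruct (Hex a Ha) as [b0 [Hb0W Hb0]].
    destruct (ax_sep (f_rel 10 chi 0 1 6 0) 0 (upd E 6 a) W) as [Wa [HWaA HWa0]].
    assert (HWa : forall z, z ∈ Wa <-> z ∈ W /\ sat2 U chi 0 1 e a z).
    { intro z. rewrite HWa0, sat_f_rel by lia.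
      unfold shift, upd; simpl. reflexivity. }
    destruct (Hmin Wa) as [m [Hm Hmm]].
    { split; auto. intros z Hz. apply HWa in Hz. tauto. }
    { exists b0. apply HWa. auto. }
    apply HWa in Hm. destruct Hm as [HmW HmR].
    exists m. split.
    - split; [|split]; auto. intros b' Hb'W Hb'R. apply Hmm. apply HWa. auto.
    - intros b' [Hb'W [Hb'R Hb'm]].
      destruct (Htri m b' HmW Hb'W) as [->|[Hlt|Hlt]]; auto.
      + exfalso. apply (Hb'm m HmW HmR Hlt).
      + exfalso. apply (Hmm b'); auto. apply HWa. auto. }
  destruct (ex_fun_of_rel x W psi E) as [g [Hg Hgapp]].
  - intros a Ha. destruct (Hfun a Ha) as [b [Hb Hu]]. exists b.
    split; [apply Hpsi, Hb|intros b' Hb'; apply Hu, Hpsi, Hb'].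
  - intros a b _ Hab. apply Hpsi in Hab. apply Hab.
  - exists g. split; auto. intros a Ha.
    apply Hpsi, (Hgapp a _ Ha), (app_fval g x a _ Hg Ha); reflexivity.
Qed.

Lemma collection_uniformization (HC : Collection U) (chi : form) (i j : nat) (e : nat -> U)
  (D x : U) :
  (forall a, a ∈ D -> exists b, sat2 U chi i j e a b) ->
  exists g, fun_on U g x /\ forall a, a ∈ x -> a ∈ D -> sat2 U chi i j e a (fval g a).
Proof.
  intros Hex.
  destruct (HC chi i j e D Hex) as [v Hv].
  (* Adding [x] gives each point outside [D] a candidate value, namely itself. *)
  destruct (ex_union2 v x) as [W [HWA HW]].
  destruct (ax_choice W HWA) as [r [_ Hwo]].
  set (E := with_params 10 e (fun _ => D)).
  set (chi' := FImp (FMem 0 2) (f_rel 10 chi i j 0 1)).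
  assert (Hchi' : forall a b, sat2 U chi' 0 1 E a b <-> (a ∈ D -> sat2 U chi i j e a b)).
  { intros a b. unfold chi', sat2 at 1. cbn [sat]. rewrite sat_f_rel by lia.
    unfold shift, upd; simpl. reflexivity. }
  destruct (ex_least_witness_fun x W r chi' E Hwo) as [g [Hg Hgval]].
  - intros a Ha. destruct (classic (a ∈ D)) as [HaD|HaD].
    + destruct (Hv a HaD) as [b [Hbv Hb]]. exists b. split; [apply HW; auto|].
      apply Hchi'. auto.
    + exists a. split; [apply HW; auto|]. apply Hchi'. tauto.
  - exists g. split; auto. intros a Ha HaD. apply Hchi'; auto.
Qed.

(** * Łoś's theorem under Collection *)

Section Ultrapower.
Variables F x : U.
Hypothesis HU : is_ultrafilter U F x.
Local Notation inF := (inF U F x).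

Lemma uf_base_not_ur : ~ A x. Proof. destruct HU as (?&?&?&?&?&?&?&?); eauto. Qed.
Lemma uf_base : x ∈ F. Proof. destruct HU as (?&?&?&?&?&?&?&?); eauto. Qed.
Lemma uf_nonempty s : s ∈ F -> exists z, z ∈ s.
Proof. destruct HU as (?&?&?&?&?&?&?&?); eauto. Qed.

Lemma uf_inter a b c :
  a ∈ F -> b ∈ F -> ~ A c -> (forall z, z ∈ c <-> (z ∈ a /\ z ∈ b)) -> c ∈ F.
Proof. destruct HU as (?&?&?&?&?&?&?&?); eauto. Qed.

Lemma uf_up a b : a ∈ F -> subset_of U b x -> (forall z, z ∈ a -> z ∈ b) -> b ∈ F.
Proof. destruct HU as (?&?&?&?&?&?&?&?); eauto. Qed.

Lemma uf_ultra s : subset_of U s x ->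
  s ∈ F \/ (forall c, ~ A c -> (forall z, z ∈ c <-> (z ∈ x /\ ~ z ∈ s)) -> c ∈ F).
Proof. destruct HU as (?&?&?&?&?&?&?&?); eauto. Qed.

Definition separable (P : U -> Prop) : Prop :=
  exists s, ~ A s /\ forall y, y ∈ s <-> (y ∈ x /\ P y).

Lemma separable_ext (P Q : U -> Prop) :
  (forall y, y ∈ x -> (P y <-> Q y)) -> separable P -> separable Q.
Proof.
  intros H [s [Hs1 Hs2]]. exists s; split; auto. intro y. rewrite Hs2.
  split; intros [H1 H2]; split; auto; apply H; auto.
Qed.

Lemma inF_ext (P Q : U -> Prop) : (forall y, y ∈ x -> (P y <-> Q y)) -> inF P -> inF Q.
Proof.
  intros H [s [Hs1 [Hs2 Hs3]]]. exists s; split; auto; split; auto. intro y. rewrite Hs3.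
  split; intros [H1 H2]; split; auto; apply H; auto.
Qed.

Lemma inF_full (P : U -> Prop) : (forall y, y ∈ x -> P y) -> inF P.
Proof. intros H. exists x. split; [apply uf_base|split; [apply uf_base_not_ur|]]. firstorder. Qed.

Lemma inF_nonempty (P : U -> Prop) : inF P -> exists y, y ∈ x /\ P y.
Proof.
  intros [s [Hs1 [Hs2 Hs3]]]. destruct (uf_nonempty s Hs1) as [z Hz]. exists z. apply Hs3; auto.
Qed.

Lemma inF_inter (P Q : U -> Prop) : inF P -> inF Q -> inF (fun y => P y /\ Q y).
Proof.
  intros [s [Hs1 [Hs2 Hs3]]] [t [Ht1 [Ht2 Ht3]]].
  destruct (ex_inter s t) as [c [Hc1 Hc2]]. exists c. split; [|split; auto].
  - apply (uf_inter s t c); auto.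
  - intro y. rewrite Hc2, Hs3, Ht3. tauto.
Qed.

Lemma inF_mono (P R : U -> Prop) :
  inF P -> (forall y, y ∈ x -> P y -> R y) -> separable R -> inF R.
Proof.
  intros [s [Hs1 [Hs2 Hs3]]] H [r [Hr1 Hr2]]. exists r. split; [|split; auto].
  apply (uf_up s); auto.
  - split; auto. intros z Hz. apply Hr2 in Hz. tauto.
  - intros z Hz. apply Hs3 in Hz. apply Hr2. intuition.
Qed.

Lemma inF_not (P : U -> Prop) : separable P -> (inF (fun y => ~ P y) <-> ~ inF P).
Proof.
  intros [s [Hs1 Hs2]]. split.
  - intros H1 H2. destruct (inF_nonempty _ (inF_inter _ _ H1 H2)) as [y [_ [Hn Hp]]]. auto.
  - intros H. destruct (ax_sep (FNot (FMem 0 1)) 0 (fun _ => s) x) as [c [Hc1 Hc2]].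
    assert (Hc : forall z, z ∈ c <-> (z ∈ x /\ ~ z ∈ s)).
    { intro z. rewrite Hc2. cbn [sat]. unfold upd; simpl_eqb. tauto. }
    destruct (uf_ultra s) as [Hs|Hs].
    + split; auto. intros z Hz. apply Hs2 in Hz. tauto.
    + exfalso. apply H. exists s. auto.
    + exists c. split; [apply Hs; auto|split; auto]. intro y. rewrite Hc, Hs2. tauto.
Qed.

Lemma inF_and (P Q : U -> Prop) :
  separable P -> separable Q -> (inF (fun y => P y /\ Q y) <-> inF P /\ inF Q).
Proof.
  intros HP HQ. split.
  - intros H. split; (apply (inF_mono _ _ H); [intros; tauto|auto]).
  - intros [H1 H2]. apply inF_inter; auto.
Qed.

Definition vals (f : nat -> U) (y : U) : nat -> U := fun k => fval (f k) y.
Definition funs_on (f : nat -> U) : Prop := forall k, fun_on U (f k) x.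

Lemma vals_upd f n g y k : vals (upd f n g) y k = upd (vals f y) n (fval g y) k.
Proof. unfold vals, upd. destruct (Nat.eqb k n); auto. Qed.

Lemma funs_on_upd f n g : funs_on f -> fun_on U g x -> funs_on (upd f n g).
Proof. intros Hf Hg k. unfold upd. destruct (Nat.eqb k n); auto. Qed.

Lemma sat_f_comp_vals n skip phi f y (E : nat -> U) :
  funs_on f -> y ∈ x -> E 1 = y -> (forall k, E (3 * k + 2) = f k) ->
  (sat U E (f_comp n skip phi) <->
   sat U (fun k => if (k <? n) && negb (k =? skip) then fval (f k) y else E (3 * k)) phi).
Proof.
  intros Hf Hy HE1 HE2. rewrite sat_f_comp. split.
  - intros [c [H1 H2]]. revert H2. apply sat_ext. intro k.
    destruct (Nat.ltb_spec k n), (Nat.eqb_spec k skip); simpl; auto.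
    specialize (H1 k ltac:(lia) ltac:(lia)). rewrite HE1, HE2 in H1.
    symmetry. apply (app_fval _ x); auto.
  - intros H. exists (fun k => fval (f k) y). split; auto.
    intros k _ _. rewrite HE1, HE2. apply (app_fval _ x); auto.
Qed.

Lemma separable_sat (phi : form) (f : nat -> U) :
  funs_on f -> separable (fun y => sat U (vals f y) phi).
Proof.
  intros Hf. set (n := var_bound phi).
  destruct (ax_sep (f_comp n n phi) 1 (fun_slots f) x) as [s [Hs1 Hs2]].
  exists s; split; auto. intro y. rewrite Hs2.
  split; intros [Hy H]; split; auto; revert H;
    rewrite (sat_f_comp_vals n n phi f y) by
      (auto; intros; rewrite ?upd_eq, upd_neq, fun_slots_spec by lia; reflexivity);
    apply sat_agree; intros k Hk;
    destruct (Nat.ltb_spec k n), (Nat.eqb_spec k n); simpl; reflexivity || lia.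
Qed.

Lemma separable_sat_upd phi f n g : funs_on f -> fun_on U g x ->
  separable (fun y => sat U (upd (vals f y) n (fval g y)) phi).
Proof.
  intros Hf Hg. apply (separable_ext (fun y => sat U (vals (upd f n g) y) phi)).
  - intros y Hy. apply sat_ext. apply vals_upd.
  - apply separable_sat, funs_on_upd; auto.
Qed.

Lemma sat2_f_comp_vals q i f a b : funs_on f -> a ∈ x ->
  (sat2 U (f_comp (max (var_bound q) (S i)) i q) 1 (3 * i) (fun_slots f) a b <->
   sat U (upd (vals f a) i b) q).
Proof.
  intros Hf Ha. unfold sat2.
  rewrite (sat_f_comp_vals _ _ _ f a) by
    (auto; intros; rewrite ?upd_eq, !upd_neq, ?fun_slots_spec by lia; reflexivity).
  apply sat_agree. intros k Hk.
  destruct (Nat.ltb_spec k (max (var_bound q) (S i))), (Nat.eqb_spec k i); simpl; try lia.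
  - subst. rewrite !upd_eq. reflexivity.
  - rewrite upd_neq by auto. reflexivity.
Qed.

Lemma los_witness (HC : Collection U) q i f : funs_on f ->
  inF (fun y => exists b, sat U (upd (vals f y) i b) q) ->
  exists g, fun_on U g x /\ inF (fun y => sat U (upd (vals f y) i (fval g y)) q).
Proof.
  intros Hf [D [HDF [HDA HD]]].
  destruct (collection_uniformization HC (f_comp (max (var_bound q) (S i)) i q) 1 (3 * i)
              (fun_slots f) D x) as [g [Hg Hgval]].
  { intros a Ha. apply HD in Ha. destruct Ha as [Hax [b Hb]].
    exists b. apply sat2_f_comp_vals; auto. }
  exists g. split; auto.
  apply (inF_mono (fun y => exists b, sat U (upd (vals f y) i b) q)).
  - exists D. auto.
  - intros y Hy Hex. apply sat2_f_comp_vals, Hgval; auto. apply HD. auto.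
  - apply separable_sat_upd; auto.
Qed.

Lemma separable_fval_eq f g : fun_on U f x -> fun_on U g x ->
  separable (fun y => fval f y = fval g y).
Proof.
  intros Hf Hg.
  exact (separable_sat (FEq 0 1) (fun k => match k with 0 => f | _ => g end)
           (fun k => match k with 0 => Hf | _ => Hg end)).
Qed.

Lemma inF_fval_eq_trans f g h : fun_on U f x -> fun_on U h x ->
  inF (fun y => fval f y = fval g y) -> inF (fun y => fval g y = fval h y) ->
  inF (fun y => fval f y = fval h y).
Proof.
  intros Hf Hh H1 H2. apply (inF_mono _ _ (inF_inter _ _ H1 H2)).
  - intros y _ [-> ->]. reflexivity.
  - apply separable_fval_eq; auto.
Qed.

Lemma inF_fval_eq_sym f g : fun_on U f x -> fun_on U g x ->
  inF (fun y => fval f y = fval g y) -> inF (fun y => fval g y = fval f y).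
Proof. intros Hf Hg H. apply (inF_mono _ _ H); [auto|apply separable_fval_eq; auto]. Qed.

Lemma eqF_iff f g : fun_on U f x -> fun_on U g x ->
  (eqF U F x f g <-> inF (fun y => fval f y = fval g y)).
Proof.
  intros Hf Hg. unfold eqF. split; apply inF_ext; intros y Hy;
    rewrite (ex_app_fval f x y (fun v => app U g y v)), (app_fval g x) by auto; split; auto.
Qed.

Local Notation ucl := (uclass U F x).

Lemma class_fun_on (C : ucl) g : proj1_sig C g -> fun_on U g x.
Proof. destruct C as [C [r [Hr ->]]]. simpl. intros [H _]. auto. Qed.

Lemma class_agree (C : ucl) g h : proj1_sig C g -> proj1_sig C h ->
  inF (fun y => fval g y = fval h y).
Proof.
  destruct C as [C [r [Hr ->]]]. simpl. intros [Hg H1] [Hh H2].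
  rewrite eqF_iff in H1, H2 by auto. apply (inF_fval_eq_trans g r h); auto.
  apply inF_fval_eq_sym; auto.
Qed.

Lemma class_closed (C : ucl) g h : proj1_sig C g -> fun_on U h x ->
  inF (fun y => fval g y = fval h y) -> proj1_sig C h.
Proof.
  destruct C as [C [r [Hr ->]]]. simpl. intros [Hg H1] Hh H2. split; auto.
  rewrite eqF_iff in H1 |- * by auto. apply (inF_fval_eq_trans r g h); auto.
Qed.

Lemma class_rep (C : ucl) : exists r, proj1_sig C r.
Proof.
  destruct C as [C [r [Hr ->]]]. exists r. simpl. split; auto.
  rewrite eqF_iff by auto. apply inF_full. auto.
Qed.

Lemma class_eq_iff (C D : ucl) g h : proj1_sig C g -> proj1_sig D h ->
  (C = D <-> inF (fun y => fval g y = fval h y)).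
Proof.
  intros Hg Hh. pose proof (class_fun_on C g Hg) as Fg. pose proof (class_fun_on D h Hh) as Fh.
  split.
  - intros ->. apply (class_agree D); auto.
  - intros H.
    assert (E : proj1_sig C = proj1_sig D).
    { apply functional_extensionality. intro z. apply propositional_extensionality.
      split; intros Hz.
      - pose proof (class_fun_on C z Hz) as Fz. apply (class_closed D h z); auto.
        apply (inF_fval_eq_trans h g z); auto.
        + apply inF_fval_eq_sym; auto.
        + apply (class_agree C); auto.
      - pose proof (class_fun_on D z Hz) as Fz. apply (class_closed C g z); auto.
        apply (inF_fval_eq_trans g h z); auto. apply (class_agree D); auto. }
    destruct C as [C HC], D as [D HD]. simpl in E. subst D. f_equal. apply proof_irrelevance.
Qed.

Definition class_of (g : U) (Hg : fun_on U g x) : ucl :=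
  exist _ (ucls U F x g) (ex_intro _ g (conj Hg eq_refl)).

Lemma class_of_rep g Hg : proj1_sig (class_of g Hg) g.
Proof. simpl. split; auto. rewrite eqF_iff by auto. apply inF_full. auto. Qed.

Lemma ex2_app_fval f g y (P : U -> U -> Prop) : fun_on U f x -> fun_on U g x -> y ∈ x ->
  ((exists a b, app U f y a /\ app U g y b /\ P a b) <-> P (fval f y) (fval g y)).
Proof.
  intros Hf Hg Hy. split.
  - intros [a [b [Ha [Hb HP]]]].
    rewrite (app_fval f x) in Ha by auto. rewrite (app_fval g x) in Hb by auto. subst. exact HP.
  - intros HP. exists (fval f y), (fval g y).
    rewrite (app_fval f x), (app_fval g x) by auto. auto.
Qed.

Lemma inF_transport (R : U -> U -> Prop) g h g' h' :
  inF (fun y => fval g y = fval g' y) -> inF (fun y => fval h y = fval h' y) ->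
  separable (fun y => R (fval g' y) (fval h' y)) ->
  inF (fun y => R (fval g y) (fval h y)) -> inF (fun y => R (fval g' y) (fval h' y)).
Proof.
  intros Hg Hh Hsep H. apply (inF_mono _ _ (inF_inter _ _ (inF_inter _ _ Hg Hh) H)); auto.
  intros y _ [[<- <-] HR]. exact HR.
Qed.

Definition los_for (phi : form) : Prop :=
  forall (rho : nat -> ucl) (f : nat -> U), (forall k, proj1_sig (rho k) (f k)) ->
    (sat (ultrapower U F x) rho phi <-> inF (fun y => sat U (vals f y) phi)).

Lemma funs_on_reps (rho : nat -> ucl) f : (forall k, proj1_sig (rho k) (f k)) -> funs_on f.
Proof. intros Hrf k. apply (class_fun_on (rho k)). auto. Qed.

Lemma los_mem n m : los_for (FMem n m).
Proof.
  intros rho f Hrf. pose proof (funs_on_reps rho f Hrf) as Hf.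
  change (umem U F x (rho n) (rho m) <-> inF (fun y => fval (f n) y ∈ fval (f m) y)).
  split.
  - intros [g [h [Hg [Hh H]]]].
    pose proof (class_fun_on _ _ Hg) as Fg. pose proof (class_fun_on _ _ Hh) as Fh.
    apply (inF_transport (fun a b => a ∈ b) g h).
    + apply (class_agree (rho n)); auto.
    + apply (class_agree (rho m)); auto.
    + exact (separable_sat (FMem n m) f Hf).
    + revert H. apply inF_ext. intros y Hy. apply ex2_app_fval; auto.
  - intros H. exists (f n), (f m). do 2 (split; auto).
    revert H. apply inF_ext. intros y Hy. symmetry. apply ex2_app_fval; auto.
Qed.

Lemma los_eq n m : los_for (FEq n m).
Proof. intros rho f Hrf. apply class_eq_iff; auto. Qed.

Lemma los_ur n : los_for (FUr n).
Proof.
  intros rho f Hrf. pose proof (funs_on_reps rho f Hrf) as Hf.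
  change (uur U F x (rho n) <-> inF (fun y => A (fval (f n) y))).
  split.
  - intros [g [Hg H]]. pose proof (class_fun_on _ _ Hg) as Fg.
    assert (Hgf : inF (fun y => fval g y = fval (f n) y)) by (apply (class_agree (rho n)); auto).
    apply (inF_transport (fun a _ => A a) g g (f n) (f n) Hgf Hgf).
    + exact (separable_sat (FUr n) f Hf).
    + revert H. apply inF_ext. intros y Hy. apply (ex_app_fval g x y (fun a => A a)); auto.
  - intros H. exists (f n). split; auto.
    revert H. apply inF_ext. intros y Hy. symmetry.
    apply (ex_app_fval (f n) x y (fun a => A a)); auto.
Qed.

Lemma los_bot : los_for FBot.
Proof.
  intros rho f Hrf. cbn [sat]. split; [tauto|]. intros H. destruct (inF_nonempty _ H) as [_ [_ []]].
Qed.

Lemma los_not p : los_for p -> los_for (FNot p).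
Proof.
  intros IH rho f Hrf. cbn [sat]. rewrite (IH rho f Hrf), inF_not; [tauto|].
  apply separable_sat, (funs_on_reps rho); auto.
Qed.

Lemma los_and p q : los_for p -> los_for q -> los_for (FAnd p q).
Proof.
  intros IHp IHq rho f Hrf. pose proof (funs_on_reps rho f Hrf) as Hf. cbn [sat].
  rewrite (IHp rho f Hrf), (IHq rho f Hrf), inF_and; [tauto| |]; apply separable_sat; auto.
Qed.

Lemma los_equiv p q : (forall M e, sat M e p <-> sat M e q) -> los_for p -> los_for q.
Proof.
  intros Hpq IH rho f Hrf. rewrite <- Hpq, (IH rho f Hrf).
  split; apply inF_ext; intros; rewrite Hpq; tauto.
Qed.

Lemma los_ex (HC : Collection U) n p : los_for p -> los_for (FEx n p).
Proof.
  intros IH rho f Hrf. pose proof (funs_on_reps rho f Hrf) as Hf.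
  assert (Hupd : forall C g, proj1_sig C g ->
    (sat (ultrapower U F x) (upd rho n C) p <->
     inF (fun y => sat U (upd (vals f y) n (fval g y)) p))).
  { intros C g Hg. rewrite (IH (upd rho n C) (upd f n g)).
    - split; apply inF_ext; intros; apply sat_ext; intro k; rewrite vals_upd; reflexivity.
    - intro k. unfold upd. destruct (Nat.eqb k n); auto. }
  cbn [sat]. split.
  - intros [C H]. destruct (class_rep C) as [g Hg]. rewrite (Hupd C g Hg) in H.
    apply (inF_mono _ _ H); [eauto|exact (separable_sat (FEx n p) f Hf)].
  - intros H. destruct (los_witness HC p n f Hf H) as [g [Hg Hin]].
    exists (class_of g Hg). rewrite (Hupd _ g (class_of_rep g Hg)). exact Hin.
Qed.

Lemma los_all_formulas (HC : Collection U) phi : los_for phi.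
Proof.
  induction phi.
  - apply los_mem.
  - apply los_eq.
  - apply los_ur.
  - apply los_bot.
  - apply los_not; auto.
  - apply los_and; auto.
  - apply (los_equiv (FNot (FAnd (FNot phi1) (FNot phi2)))).
    + intros M e. cbn [sat]. destruct (classic (sat M e phi1)); tauto.
    + apply los_not, los_and; apply los_not; auto.
  - apply (los_equiv (FNot (FAnd phi1 (FNot phi2)))).
    + intros M e. cbn [sat]. destruct (classic (sat M e phi2)); tauto.
    + apply los_not, los_and, los_not; auto.
  - apply (los_equiv (FNot (FEx n (FNot phi)))).
    + intros M e. cbn [sat]. split.
      * intros H a. apply NNPP. eauto.
      * intros H [a Ha]. auto.
    + apply los_not, los_ex, los_not; auto.
  - apply los_ex; auto.
Qed.

Lemma ex_vals f y phi : funs_on f -> y ∈ x ->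
  ((exists g, (forall k, app U (f k) y (g k)) /\ sat U g phi) <-> sat U (vals f y) phi).
Proof.
  intros Hf Hy. split.
  - intros [g [Hg H]]. revert H. apply sat_ext. intro k. symmetry. apply (app_fval (f k) x); auto.
  - intros H. exists (vals f y). split; auto. intro k. apply (app_fval (f k) x); auto.
Qed.

Theorem los_of_collection (HC : Collection U) : Los U F x.
Proof.
  intros phi rho f Hrf. pose proof (funs_on_reps rho f Hrf) as Hf.
  rewrite (los_all_formulas HC phi rho f Hrf).
  split; apply inF_ext; intros y Hy; rewrite ex_vals; tauto.
Qed.

End Ultrapower.

(** * A maximal chain by recursion along a well-ordering *)

(* In these formulas slot 1 holds the well-ordering [r] and slot 2 the set [FS]. *)
Definition f_rle (a b : nat) : form := FOr (FEq a b) (f_app 1 a b).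
Definition f_dominates (d g : nat) : form :=
  FAll 21 (FImp (FMem 21 d) (FImp (f_app 1 21 g) (FAll 22 (FImp (FMem 22 21) (FMem 22 g))))).
Definition f_attempt (g d : nat) : form :=
  FAnd (FAll 20 (FImp (FMem 20 d) (FAnd (FMem 20 2) (f_rle 20 g))))
       (FAll 20 (FImp (FMem 20 2) (FImp (f_rle 20 g) (FIff (FMem 20 d) (f_dominates d 20))))).

Section MaximalChain.
Variables FS r : U.
Hypothesis FS_not_ur : ~ A FS.
Hypothesis r_wo : well_orders U r FS.
Local Notation lt := (app U r).

Definition rle (a b : U) : Prop := a = b \/ lt a b.

Lemma wo_irrefl a : a ∈ FS -> ~ lt a a.
Proof. apply r_wo. Qed.

Lemma wo_trans a b c : a ∈ FS -> b ∈ FS -> c ∈ FS -> lt a b -> lt b c -> lt a c.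
Proof. apply r_wo. Qed.

Lemma wo_total a b : a ∈ FS -> b ∈ FS -> a = b \/ lt a b \/ lt b a.
Proof. apply r_wo. Qed.

Lemma lt_rle_trans a b c : a ∈ FS -> b ∈ FS -> c ∈ FS -> lt a b -> rle b c -> lt a c.
Proof. intros ? ? ? H1 [<-|H2]; auto. apply (wo_trans a b c); auto. Qed.

Lemma rle_lt_trans a b c : a ∈ FS -> b ∈ FS -> c ∈ FS -> rle a b -> lt b c -> lt a c.
Proof. intros ? ? ? [->|H1] H2; auto. apply (wo_trans a b c); auto. Qed.

Lemma wo_induction (P : U -> Prop) :
  (exists s, ~ A s /\ forall z, z ∈ s <-> (z ∈ FS /\ ~ P z)) ->
  (forall G, G ∈ FS -> (forall H, H ∈ FS -> lt H G -> P H) -> P G) ->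
  forall G, G ∈ FS -> P G.
Proof.
  intros [s [HsA Hs]] Hstep G HG. apply NNPP. intro HnG.
  destruct r_wo as (_ & _ & _ & Hmin).
  destruct (Hmin s) as [m [Hm Hmm]].
  - split; auto. intros z Hz. apply Hs in Hz. tauto.
  - exists G. apply Hs. auto.
  - apply Hs in Hm as [HmF Hnm]. apply Hnm, Hstep; auto.
    intros H HF Hlt. apply NNPP. intro HnH. apply (Hmm H); auto. apply Hs. auto.
Qed.

Definition dominates (D G : U) : Prop := forall H, H ∈ D -> lt H G -> H ⊆ G.

(* [D] is the chain built by recursion along [r], computed up to [G]. *)
Definition attempt (G D : U) : Prop :=
  (forall H, H ∈ D -> H ∈ FS /\ rle H G) /\
  (forall H, H ∈ FS -> rle H G -> (H ∈ D <-> dominates D H)).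

Lemma attempt_sub G D : attempt G D -> forall H, H ∈ D -> H ∈ FS.
Proof. intros [Ha _] H HH. apply Ha, HH. Qed.

Definition chain_env (a b c d : U) : nat -> U :=
  fun v => match v with 1 => r | 2 => FS | 5 => a | 6 => b | 7 => c | 8 => d | _ => FS end.

Lemma sat_f_attempt g d (E : nat -> U) :
  g > 22 \/ 2 < g < 20 -> d > 22 \/ 2 < d < 20 -> E 1 = r -> E 2 = FS ->
  (sat U E (f_attempt g d) <-> attempt (E g) (E d)).
Proof.
  intros Hg Hd H1 H2. unfold f_attempt, f_rle, f_dominates, FIff, attempt, dominates, rle.
  cbn [sat]. setoid_rewrite sat_f_app. unfold upd; simpl_eqb. rewrite H1, H2. firstorder.
Qed.

Lemma dominates_ext D D' G : (forall H, H ∈ D -> H ∈ FS) -> (forall H, H ∈ D' -> H ∈ FS) ->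
  (forall H, H ∈ FS -> lt H G -> (H ∈ D <-> H ∈ D')) -> (dominates D G <-> dominates D' G).
Proof.
  intros HD HD' Heq. split; intros Hdom H HH Hlt; apply Hdom; auto.
  - apply (Heq H (HD' H HH) Hlt). exact HH.
  - apply (Heq H (HD H HH) Hlt). exact HH.
Qed.

Lemma attempt_coherent G1 D1 G2 D2 : G1 ∈ FS -> G2 ∈ FS -> attempt G1 D1 -> attempt G2 D2 ->
  forall H, H ∈ FS -> rle H G1 -> rle H G2 -> (H ∈ D1 <-> H ∈ D2).
Proof.
  intros HG1 HG2 [A1 C1] [A2 C2].
  apply (wo_induction (fun H => rle H G1 -> rle H G2 -> (H ∈ D1 <-> H ∈ D2))).
  - destruct (ax_sep (FNot (FImp (f_rle 3 5) (FImp (f_rle 3 6) (FIff (FMem 3 7) (FMem 3 8)))))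
                3 (chain_env G1 G2 D1 D2) FS) as [s [HsA Hs]].
    exists s. split; [exact HsA|]. intro z. rewrite Hs. unfold f_rle, FIff, rle. cbn [sat].
    setoid_rewrite sat_f_app. reflexivity.
  - intros H HF IH Hle1 Hle2. rewrite (C1 H HF Hle1), (C2 H HF Hle2).
    apply dominates_ext; [intros; apply A1; auto|intros; apply A2; auto|].
    intros H' HF' Hlt. apply IH; auto; right.
    + apply (lt_rle_trans H' H G1); auto.
    + apply (lt_rle_trans H' H G2); auto.
Qed.

Lemma ex_attempt_members : exists Ch, ~ A Ch /\
  forall z, z ∈ Ch <-> (z ∈ FS /\ exists D, attempt z D /\ z ∈ D).
Proof.
  destruct (ax_sep (FEx 4 (FAnd (f_attempt 3 4) (FMem 3 4))) 3 (chain_env FS FS FS FS) FS)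
    as [Ch [HChA HCh]].
  exists Ch. split; [exact HChA|]. intro z. rewrite HCh. cbn [sat].
  setoid_rewrite sat_f_attempt; try lia; reflexivity.
Qed.

Lemma attempt_step G0 : G0 ∈ FS -> (forall H, H ∈ FS -> lt H G0 -> exists D, attempt H D) ->
  exists D, attempt G0 D.
Proof.
  intros HG0 Hbelow.
  destruct ex_attempt_members as [Ch [_ HCh]].
  destruct (ax_sep (f_app 1 3 5) 3 (chain_env G0 FS FS FS) Ch) as [D0 [HD0A HD0']].
  assert (HD0 : forall z, z ∈ D0 <-> (z ∈ FS /\ lt z G0 /\ exists D, attempt z D /\ z ∈ D)).
  { intro z. rewrite HD0', sat_f_app, HCh. cbn. tauto. }
  assert (K : forall H D, H ∈ FS -> lt H G0 -> attempt H D ->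
                forall H', H' ∈ FS -> rle H' H -> (H' ∈ D0 <-> H' ∈ D)).
  { intros H D HF Hlt Ha H' HF' Hle.
    assert (Hlt' : lt H' G0) by (apply (rle_lt_trans H' H G0); auto).
    rewrite HD0. split.
    - intros [_ [_ [D' [Ha' Hin]]]].
      apply (attempt_coherent H' D' H D); auto. left; reflexivity.
    - intros Hin. do 2 (split; auto). destruct (Hbelow H' HF' Hlt') as [D' Ha'].
      exists D'. split; auto. apply (attempt_coherent H' D' H D); auto. left; reflexivity. }
  destruct (ex_add_when D0 G0 (dominates D0 G0) HD0A) as [D [_ HD]].
  assert (HD0F : forall z, z ∈ D0 -> z ∈ FS) by (intros z Hz; apply HD0 in Hz; tauto).
  assert (HDF : forall z, z ∈ D -> z ∈ FS /\ rle z G0).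
  { intros z Hz. apply HD in Hz as [Hz|[-> _]]; [apply HD0 in Hz|]; unfold rle; tauto. }
  assert (Hlow : forall H, H ∈ FS -> lt H G0 -> (H ∈ D <-> H ∈ D0)).
  { intros H HF Hlt. rewrite HD. split; [|auto].
    intros [Hin|[-> _]]; auto. exfalso. apply (wo_irrefl G0); auto. }
  exists D. split; [exact HDF|]. intros H HF [->|Hlt].
  - rewrite (dominates_ext D D0 G0), HD; [|exact (fun z Hz => proj1 (HDF z Hz))|auto|auto].
    split; [intros [Hin|[_ Hd]]; auto|auto].
    exfalso. apply (wo_irrefl G0); auto. apply HD0 in Hin. tauto.
  - destruct (Hbelow H HF Hlt) as [DH HaH].
    rewrite Hlow, (K H DH HF Hlt HaH H HF (or_introl eq_refl)), (proj2 HaH H HF (or_introl eq_refl))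
      by auto.
    apply dominates_ext; [apply (attempt_sub H DH HaH)|exact (fun z Hz => proj1 (HDF z Hz))|].
    intros H' HF' Hlt'.
    rewrite Hlow by (auto; apply (wo_trans H' H G0); auto).
    symmetry. apply (K H DH); auto. right; auto.
Qed.

Lemma attempt_exists G : G ∈ FS -> exists D, attempt G D.
Proof.
  revert G. apply (wo_induction (fun G => exists D, attempt G D));
    [|intros; apply attempt_step; auto].
  destruct (ax_sep (FNot (FEx 4 (f_attempt 3 4))) 3 (chain_env FS FS FS FS) FS) as [s [HsA Hs]].
  exists s. split; [exact HsA|]. intro z. rewrite Hs. cbn [sat].
  setoid_rewrite sat_f_attempt; try lia; reflexivity.
Qed.

Lemma ex_maximal_chain : (exists G, G ∈ FS) -> exists Ch,
  (forall G, G ∈ Ch -> G ∈ FS) /\ (exists G, G ∈ Ch) /\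
  (forall G1 G2, G1 ∈ Ch -> G2 ∈ Ch -> G1 ⊆ G2 \/ G2 ⊆ G1) /\
  (forall G, G ∈ FS -> (forall H, H ∈ Ch -> H ⊆ G) -> G ∈ Ch).
Proof.
  intros [G0 HG0]. destruct ex_attempt_members as [Ch [_ HCh]].
  assert (HChF : forall G, G ∈ Ch -> G ∈ FS) by (intros G HG; apply HCh in HG; tauto).
  assert (Hagree : forall G D H, G ∈ FS -> attempt G D -> H ∈ FS -> rle H G ->
                     (H ∈ Ch <-> H ∈ D)).
  { intros G D H HG Ha HF Hle. rewrite HCh. split.
    - intros [_ [DH [HaH Hin]]]. apply (attempt_coherent H DH G D); auto. left; reflexivity.
    - intros Hin. destruct (attempt_exists H HF) as [DH HaH]. split; auto. exists DH.
      split; auto. apply (attempt_coherent H DH G D); auto. left; reflexivity. }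
  assert (HChar : forall G, G ∈ FS -> (G ∈ Ch <-> dominates Ch G)).
  { intros G HG. destruct (attempt_exists G HG) as [D Ha].
    rewrite (Hagree G D G), (proj2 Ha G HG (or_introl eq_refl)); auto; [|left; reflexivity].
    apply dominates_ext; auto; [apply (attempt_sub G D Ha)|]. intros H HF Hlt. symmetry.
    apply (Hagree G D H); auto. right; auto. }
  exists Ch. split; [exact HChF|split; [|split]].
  - destruct r_wo as (_ & _ & _ & Hmin).
    destruct (Hmin FS (conj FS_not_ur (fun z Hz => Hz)) (ex_intro _ G0 HG0)) as [m [Hm Hmm]].
    exists m. apply HChar; auto. intros H HH Hlt. exfalso. apply (Hmm H); auto.
  - intros G1 G2 H1 H2.
    destruct (wo_total G1 G2 (HChF _ H1) (HChF _ H2)) as [->|[Hlt|Hlt]]; auto.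
    + left. apply (HChar G2 (HChF _ H2)); auto.
    + right. apply (HChar G1 (HChF _ H1)); auto.
  - intros G HF HG. apply HChar; auto. intros H HH _. apply HG; auto.
Qed.

End MaximalChain.

(** * Ultrafilters avoiding collectible sets *)

Definition f_collectible (phi : form) (i j : nat) : form :=
  FEx 8 (FAll 9 (FImp (FMem 9 4) (FEx 10 (FAnd (FMem 10 8) (f_rel 30 phi i j 9 10))))).

Definition f_noncollectible_filter (phi : form) (i j : nat) : form :=
  FAnd (FNot (FUr 3))
  (FAnd (FAll 4 (FImp (FMem 4 3) (f_subset 4 0)))
  (FAnd (FMem 0 3)
  (FAnd (FAll 4 (FImp (FMem 4 3) (FNot (f_collectible phi i j))))
  (FAnd (FAll 4 (FAll 5 (FAll 6 (FImp (FMem 4 3) (FImp (FMem 5 3) (FImp (FNot (FUr 6))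
          (FImp (FAll 7 (FIff (FMem 7 6) (FAnd (FMem 7 4) (FMem 7 5)))) (FMem 6 3))))))))
        (FAll 4 (FAll 5 (FImp (FMem 4 3) (FImp (f_subset 5 0)
          (FImp (FAll 7 (FImp (FMem 7 4) (FMem 7 5))) (FMem 5 3)))))))))).

Section NonCollectible.
Variable phi : form.
Variables i j : nat.
Variable e : nat -> U.
Variable w : U.
Local Notation Q := (sat2 U phi i j e).

Definition collectible (P : U -> Prop) : Prop :=
  exists v, forall a, P a -> exists b, b ∈ v /\ Q a b.

Definition noncollectible_filter (G : U) : Prop :=
  ~ A G /\ (forall B, B ∈ G -> subset_of U B w) /\ w ∈ G /\
  (forall B, B ∈ G -> ~ collectible (fun a => a ∈ B)) /\
  (forall B C D, B ∈ G -> C ∈ G -> ~ A D ->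
     (forall z, z ∈ D <-> (z ∈ B /\ z ∈ C)) -> D ∈ G) /\
  (forall B C, B ∈ G -> subset_of U C w -> B ⊆ C -> C ∈ G).

Lemma sat_f_noncollectible_filter G :
  sat U (upd (with_params 30 e (fun _ => w)) 3 G) (f_noncollectible_filter phi i j) <->
  noncollectible_filter G.
Proof.
  unfold f_noncollectible_filter, f_collectible, FIff. cbn [sat].
  setoid_rewrite sat_f_subset. setoid_rewrite sat_f_rel; [|lia..].
  unfold shift, upd; simpl. unfold noncollectible_filter, collectible. firstorder.
Qed.

Lemma collectible_mono (P P' : U -> Prop) :
  collectible P -> (forall a, P' a -> P a) -> collectible P'.
Proof. intros [v Hv] H. exists v. intros a Ha. apply Hv, H, Ha. Qed.

Lemma collectible_union (P1 P2 : U -> Prop) :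
  collectible P1 -> collectible P2 -> collectible (fun a => P1 a \/ P2 a).
Proof.
  intros [v1 H1] [v2 H2]. destruct (ex_union2 v1 v2) as [v [_ Hv]]. exists v.
  intros a [Ha|Ha]; [destruct (H1 a Ha) as [b [Hb HQ]]|destruct (H2 a Ha) as [b [Hb HQ]]];
    exists b; split; auto; apply Hv; auto.
Qed.

Lemma noncollectible_nonempty B : ~ collectible (fun a => a ∈ B) -> exists a, a ∈ B.
Proof.
  intros Hnc. apply NNPP. intro Hne. apply Hnc. exists B. intros a Ha. exfalso. eauto.
Qed.

Lemma noncollectible_not_ur B : ~ collectible (fun a => a ∈ B) -> ~ A B.
Proof.
  intros Hnc HA. destruct (noncollectible_nonempty B Hnc) as [a Ha]. exact (ax_urel B HA a Ha).
Qed.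

Lemma ex_noncollectible_filters :
  exists FS, ~ A FS /\ forall G, G ∈ FS <-> noncollectible_filter G.
Proof.
  destruct (ax_power w) as [Pw [_ HPw]].
  destruct (ax_power Pw) as [PPw [_ HPPw]].
  destruct (ax_sep (f_noncollectible_filter phi i j) 3 (with_params 30 e (fun _ => w)) PPw)
    as [FS [HFSA HFS]].
  exists FS. split; [exact HFSA|]. intro G.
  rewrite HFS, sat_f_noncollectible_filter. split; [tauto|].
  intros HG. split; [|exact HG]. apply HPPw. destruct HG as [HGA [HGsub _]].
  split; [exact HGA|]. intros B HB. apply HPw. auto.
Qed.

Lemma ex_noncollectible_filter :
  ~ collectible (fun a => a ∈ w) -> exists G, noncollectible_filter G.
Proof.
  intros Hw. pose proof (noncollectible_not_ur w Hw) as HwA.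
  destruct (ex_sing w) as [G [HGA HG]]. exists G.
  split; [auto|split; [|split; [|split; [|split]]]].
  - intros B HB. apply HG in HB. subst. split; auto.
  - apply HG. auto.
  - intros B HB. apply HG in HB. subst. auto.
  - intros B C D HB HC HD HDm. apply HG in HB. apply HG in HC. subst. apply HG.
    apply ax_ext; auto. intro z. rewrite HDm. tauto.
  - intros B C HB HC HBC. apply HG in HB. subst. apply HG.
    apply ax_ext; [apply HC|auto|]. intro z. split; [apply HC|apply HBC].
Qed.

Lemma noncollectible_filter_union (Ch M : U) :
  (forall G, G ∈ Ch -> noncollectible_filter G) -> (exists G, G ∈ Ch) ->
  (forall G1 G2, G1 ∈ Ch -> G2 ∈ Ch -> G1 ⊆ G2 \/ G2 ⊆ G1) ->
  ~ A M -> (forall B, B ∈ M <-> exists G, G ∈ Ch /\ B ∈ G) -> noncollectible_filter M.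
Proof.
  intros HChf [G0 HG0] Hchain HMA HM.
  split; [exact HMA|split; [|split; [|split; [|split]]]].
  - intros B HB. apply HM in HB as [G [HG HB]]. apply (HChf G HG); auto.
  - apply HM. exists G0. split; auto. apply (HChf G0 HG0).
  - intros B HB. apply HM in HB as [G [HG HB]]. apply (HChf G HG); auto.
  - intros B C D HB HC HD HDm. apply HM in HB as [G1 [HG1 HB]]. apply HM in HC as [G2 [HG2 HC]].
    destruct (Hchain G1 G2 HG1 HG2) as [Hs|Hs].
    + apply HM. exists G2. split; auto. apply (HChf G2 HG2) with B C; auto.
    + apply HM. exists G1. split; auto. apply (HChf G1 HG1) with B C; auto.
  - intros B C HB HC HBC. apply HM in HB as [G [HG HB]].
    apply HM. exists G. split; auto. apply (HChf G HG) with B; auto.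
Qed.

Lemma noncollectible_filter_extend M B : noncollectible_filter M -> subset_of U B w ->
  (forall D, D ∈ M -> ~ collectible (fun a => a ∈ D /\ a ∈ B)) ->
  exists MB, noncollectible_filter MB /\ M ⊆ MB /\ B ∈ MB.
Proof.
  intros (HMA & Msub & Mw & Mnc & Mint & Mup) HB HnC.
  destruct (ax_power w) as [Pw [_ HPw]].
  destruct (ax_sep (FEx 6 (FAnd (FMem 6 4) (FAll 7 (FImp (FMem 7 6) (FImp (FMem 7 5) (FMem 7 3))))))
     3 (fun v => match v with 4 => M | 5 => B | _ => w end) Pw) as [MB [HMBA HMB']].
  assert (HMB : forall C, C ∈ MB <->
            subset_of U C w /\ exists D, D ∈ M /\ forall z, z ∈ D -> z ∈ B -> z ∈ C).
  { intro C. rewrite HMB', HPw. cbn [sat]. unfold upd; simpl_eqb. reflexivity. }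
  exists MB. split; [|split].
  - split; [exact HMBA|split; [|split; [|split; [|split]]]].
    + intros C HC. apply HMB in HC. tauto.
    + apply HMB. split; [apply Msub; auto|]. exists w. auto.
    + intros C HC HCc. apply HMB in HC as [_ [D [HD HDC]]].
      apply (HnC D HD). apply (collectible_mono _ _ HCc). intros a [H1 H2]. auto.
    + intros C1 C2 C HC1 HC2 HCA HC. apply HMB in HC1 as [HC1w [D1 [HD1 HD1C]]].
      apply HMB in HC2 as [_ [D2 [HD2 HD2C]]]. apply HMB. split.
      * split; auto. intros z Hz. apply HC in Hz. apply HC1w. tauto.
      * destruct (ex_inter D1 D2) as [D [HDA HD]]. exists D. split.
        -- apply (Mint D1 D2 D); auto.
        -- intros z Hz HzB. apply HD in Hz. apply HC. split; [apply HD1C|apply HD2C]; tauto.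
    + intros C C' HC HC' HCC'. apply HMB in HC as [_ [D [HD HDC]]].
      apply HMB. split; auto. exists D. split; auto.
  - intros C HC. apply HMB. split; [apply Msub; auto|]. exists C. auto.
  - apply HMB. split; auto. exists w. auto.
Qed.

Lemma maximal_noncollectible_filter_ultra M : noncollectible_filter M ->
  (forall G, noncollectible_filter G -> M ⊆ G -> G ⊆ M) -> is_ultrafilter U M w.
Proof.
  intros HMf Hmax. pose proof HMf as (HMA & Msub & Mw & Mnc & Mint & Mup).
  assert (Hext : forall B, subset_of U B w ->
            (forall D, D ∈ M -> ~ collectible (fun a => a ∈ D /\ a ∈ B)) -> B ∈ M).
  { intros B HB HnC.
    destruct (noncollectible_filter_extend M B HMf HB HnC) as [MB [HMB [HMMB HBMB]]].
    apply (Hmax MB); auto. }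
  split; [exact HMA|split; [apply noncollectible_not_ur, Mnc, Mw|]].
  do 2 (split; [auto|]). split; [intros s Hs; apply noncollectible_nonempty, Mnc, Hs|].
  do 2 (split; [auto|]).
  intros s Hs.
  (* If some member of [M] meets [s] in a collectible set, the complement of [s] is compatible
     with [M]; otherwise [s] itself is. *)
  destruct (classic (exists D, D ∈ M /\ collectible (fun a => a ∈ D /\ a ∈ s)))
    as [[D1 [HD1 HC1]]|Hn].
  - right. intros c HcA Hc. apply Hext.
    + split; auto. intros z Hz. apply Hc in Hz. tauto.
    + intros D2 HD2 HC2. destruct (ex_inter D1 D2) as [D [HDA HD]].
      apply (Mnc D); [apply (Mint D1 D2 D); auto|].
      apply (collectible_mono _ _ (collectible_union _ _ HC1 HC2)). intros a Ha. apply HD in Ha.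
      destruct (classic (a ∈ s)); [left; tauto|right]. split; [tauto|]. apply Hc. split; [|auto].
      apply (Msub D1 HD1). tauto.
  - left. apply Hext; auto. intros D HD HC. apply Hn. eauto.
Qed.

Lemma ex_noncollectible_ultrafilter : ~ collectible (fun a => a ∈ w) ->
  exists M, is_ultrafilter U M w /\ forall B, B ∈ M -> ~ collectible (fun a => a ∈ B).
Proof.
  intros Hw.
  destruct ex_noncollectible_filters as [FS [HFSA HFS]].
  destruct (ax_choice FS HFSA) as [r [_ Hwo]].
  destruct (ex_noncollectible_filter Hw) as [G0 HG0].
  destruct (ex_maximal_chain FS r HFSA Hwo) as [Ch [HChF [HChne [Hchain HChmax]]]].
  { exists G0. apply HFS. auto. }
  assert (HChf : forall G, G ∈ Ch -> noncollectible_filter G) by (intros G HG; apply HFS; auto).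
  destruct (ax_union Ch) as [M [HMA HM]].
  assert (HMf : noncollectible_filter M) by (apply (noncollectible_filter_union Ch); auto).
  exists M. split; [|apply HMf].
  apply maximal_noncollectible_filter_ultra; auto. intros G HG HMG B HB.
  apply HM. exists G. split; auto. apply HChmax; [apply HFS; auto|].
  intros H HH z Hz. apply HMG, HM. eauto.
Qed.

End NonCollectible.

(** * Failure of Łoś without Collection *)

Section LosFailure.
Variable phi : form.
Variables i j : nat.
Variable e : nat -> U.
Variables w M : U.
Hypothesis total : forall a, a ∈ w -> exists b, sat2 U phi i j e a b.
Hypothesis M_ultra : is_ultrafilter U M w.
Hypothesis M_nc : forall B, B ∈ M -> ~ collectible phi i j e (fun a => a ∈ B).

Lemma ex_param_funs : exists f, funs_on w f /\ forall k a, a ∈ w -> fval (f k) a = upd e i a k.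
Proof.
  destruct (choice (fun k g => fun_on U g w /\ forall a, a ∈ w -> fval g a = upd e i a k))
    as [f Hf]; [|exists f; split; intro k; apply Hf].
  intro k. destruct (Nat.eqb_spec k i) as [->|Hki].
  - destruct (ex_fun_of_rel w w (FEq 1 0) e) as [g [Hg Hgapp]].
    + intros a Ha. exists a. split; [reflexivity|]. intros b' Hb'. exact Hb'.
    + intros a b Ha Hab. cbn in Hab. subst. exact Ha.
    + exists g. split; auto. intros a Ha. rewrite upd_eq.
      apply (Hgapp a), (app_fval g w); auto.
  - destruct (ex_sing (e k)) as [s [_ Hs]].
    destruct (ex_fun_of_rel w s (FEq 1 2) (fun _ => e k)) as [g [Hg Hgapp]].
    + intros a Ha. exists (e k). split; [reflexivity|]. intros b' Hb'. exact Hb'.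
    + intros a b Ha Hab. cbn in Hab. apply Hs. exact Hab.
    + exists g. split; auto. intros a Ha. rewrite upd_neq by auto.
      apply (Hgapp a), (app_fval g w); auto.
Qed.

Lemma not_los_of_noncollectible : ~ Los U M w.
Proof.
  intros HL.
  destruct ex_param_funs as [f [Hf Hfval]].
  set (rho := fun k => class_of M w (f k) (Hf k)).
  assert (Hrho : forall k, proj1_sig (rho k) (f k)) by (intro k; apply class_of_rep; auto).
  assert (Hex : sat (ultrapower U M w) rho (FEx j phi)).
  { apply (HL (FEx j phi) rho f Hrho), inF_full; auto. intros y Hy.
    exists (upd e i y). split; [|apply total; auto].
    intro k. rewrite <- Hfval by auto. apply (app_fval (f k) w); auto. }
  destruct Hex as [D HD]. destruct (class_rep M w M_ultra D) as [h Hh].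
  pose proof (class_fun_on M w D h Hh) as Fh.
  assert (Hrho' : forall k, proj1_sig (upd rho j D k) (upd f j h k)).
  { intro k. unfold upd. destruct (Nat.eqb k j); auto. }
  destruct (proj1 (HL phi (upd rho j D) (upd f j h) Hrho') HD) as [s [HsM [_ Hs]]].
  (* The range of the witness [h] collects [s]. *)
  destruct (ex_image h w Fh) as [v Hv].
  apply (M_nc s HsM). exists v. intros a Ha. apply Hs in Ha as [Haw [g [Hg Hsat]]].
  exists (fval h a). split; auto. revert Hsat. apply sat_ext. intro k.
  specialize (Hg k). unfold upd in Hg |- *. destruct (Nat.eqb_spec k j).
  - apply (app_fval h w) in Hg; auto.
  - apply (app_fval (f k) w) in Hg; auto. rewrite Hg, Hfval by auto. reflexivity.
Qed.

End LosFailure.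

End ZFCU.

Theorem mainTheorem12 (U : structure) :
  ZFCU_R U ->
  (Collection U <->
   forall F x : U, is_ultrafilter U F x -> Los U F x).
Proof.
  intros HZ. split.
  - intros HC F x HU. exact (los_of_collection U HZ F x HU HC).
  - intros HL phi i j e w total. apply NNPP. intro Hfail.
    destruct (ex_noncollectible_ultrafilter U HZ phi i j e w) as [M [M_ultra M_nc]].
    + intros [v Hv]. apply Hfail. exists v. exact Hv.
    + exact (not_los_of_noncollectible U HZ phi i j e w M total M_ultra M_nc (HL M w M_ultra)).
Qed.
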